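(* Identify $\mathrm{SO}(2)$ with the unit circle $\mathbb{C}_1=\{z\in\mathbb{C}:|z|=1\}$. Let $G([n],E)$ be a graph with $E=E_g\cup E_b$, let $\boldsymbol{z}^\star=(z_1^\star,\dots,z_n^\star)\in\mathbb{C}_1^n$ be unknown, and suppose we observe $z_{jk}\in\mathbb{C}_1$ for $jk\in E$ with $z_{jk}=z_j^\star\overline{z_k^\star}$ for $jk\in E_g$ and $z_{jk}$ arbitrary (adversarial) for $jk\in E_b$. Let $E^j=\{k:jk\in E\}$, $E_b^j=\{k:jk\in E_b\}$, $n_j=\#(E^j)$ and $\alpha_0=\max_j\#(E_b^j)/n_j$. Assume: $\alpha_0<1/4$; there is $c\in\mathbb{C}_1$ with $d_\angle(c,\overline{z_j^\star}z_j(0))<\pi/2$ for all $j$; and for every nonempty $J\subset[n]$ with $\#(J)\le n/2$ there is $j\in J$ with $\#\big(E^j\cap([n]\setminus J)\big)>\#\big(E^j\cap J\big)$. Let $\eta\in(0,1)$ and let $(\boldsymbol{z}(t))_{t\in\mathbb{N}}$ be generated by $\eta$-damped trimmed averaging synchronization: at time $t$, with $j=t\bmod n$, $$z_j(t+1)=\mathrm{Exp}_{z_j(t)}\Big[\eta\cdot\mathrm{ave}\Big(\mathcal{T}_{0.25}\big\{\mathrm{Log}_{z_j(t)}(z_{jk}z_k(t)):k\in E^j\big\}\Big)\Big],$$ and $z_k(t+1)=z_k(t)$ for $k\ne j$. Then $\delta(\boldsymbol{z}(t))\to 0$, i.e. the algorithm exactly recovers $\boldsymbol{z}^\star$ up to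 a global rotation. Further, if $G$ is the complete graph, $\boldsymbol{z}(t)$ converges linearly to $\boldsymbol{z}^\star$ (up to global rotation), i.e. $\delta(\boldsymbol{z}(t))\to 0$ at a geometric rate.
   Context: $\arg(e^{i\theta})=\theta\in(-\pi,\pi]$; $d_\angle(z_1,z_2)=|\arg(z_1\overline{z_2})|$. $\mathrm{Exp}_z(\theta)=e^{i\theta}z$ and $\mathrm{Log}_z(y)=\arg(y\overline{z})$ (tangent spaces identified with $\mathbb{R}$). For a finite multiset $\mathcal{X}\subset\mathbb{R}$, $\mathcal{X}_p$ is its empirical $p$-quantile, $\mathcal{T}_{0.25}\mathcal{X}=\{x\in\mathcal{X}:\mathcal{X}_{0.25}\le x\le\mathcal{X}_{0.75}\}$, and $\mathrm{ave}(\mathcal{X})$ is the arithmetic mean. $\delta(\boldsymbol{z})=\max_{jk\in E}d_\angle(\overline{z_j^\star}z_j,\overline{z_k^\star}z_k)$. *)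

From Stdlib Require Import Reals Lra List ClassicalEpsilon.
From Coquelicot Require Import Coquelicot.
Import ListNotations.
Open Scope R_scope.

Definition arg (z : C) : R :=
  epsilon (inhabits 0%R)
    (fun th => - PI < th <= PI /\ z = Cmult (RtoC (Cmod z)) (cos th, sin th)).

Definition dangle (z1 z2 : C) : R := Rabs (arg (Cmult z1 (Cconj z2))).

Definition ExpC (z : C) (th : R) : C := Cmult (cos th, sin th) z.
Definition LogC (z y : C) : R := arg (Cmult y (Cconj z)).

Definition Rleb (x y : R) : bool := if Rle_dec x y then true else false.

(* Empirical p-quantile of a finite multiset X (a list):
   X_p = min { x in X : #{y in X : y <= x} >= p * #X }  (= inf{x : F_X(x) >= p}). *)
Definition count_le (x : R) (X : list R) : nat :=
  length (filter (fun y => Rleb y x) X).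

Definition quantile (p : R) (X : list R) : R :=
  match filter (fun x => Rleb (p * INR (length X)) (INR (count_le x X))) X with
  | [] => 0
  | x :: r => fold_right Rmin x r
  end.

Definition trim25 (X : list R) : list R :=
  filter (fun x => Rleb (quantile (1/4) X) x && Rleb x (quantile (3/4) X))%bool X.

(* arithmetic mean (0 for the empty list, never used) *)
Definition ave (X : list R) : R := fold_right Rplus 0 X / INR (length X).

(* vertex set [n] = {0,...,n-1}; graph given by a boolean edge relation *)
Definition vertices (n : nat) : list nat := seq 0 n.
Definition nbrs (n : nat) (E : nat -> nat -> bool) (j : nat) : list nat :=
  filter (E j) (vertices n).

Definition alpha0 (n : nat) (E Eb : nat -> nat -> bool) : R :=
  fold_right Rmax 0
    (map (fun j => INR (length (nbrs n Eb j)) / INR (length (nbrs n E j)))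
         (vertices n)).

Definition delta (n : nat) (E : nat -> nat -> bool) (zstar z : nat -> C) : R :=
  fold_right Rmax 0
    (flat_map (fun j =>
       map (fun k => dangle (Cmult (Cconj (zstar j)) (z j))
                             (Cmult (Cconj (zstar k)) (z k)))
           (nbrs n E j))
       (vertices n)).

Definition sync_step (n : nat) (E : nat -> nat -> bool) (zobs : nat -> nat -> C)
    (eta : R) (t : nat) (z : nat -> C) : nat -> C :=
  let j := Nat.modulo t n in
  fun i =>
    if Nat.eqb i j then
      ExpC (z j)
        (eta * ave (trim25 (map (fun k => LogC (z j) (Cmult (zobs j k) (z k)))
                                (nbrs n E j))))
    else z i.

Fixpoint sync_traj (n : nat) (E : nat -> nat -> bool) (zobs : nat -> nat -> C)
    (eta : R) (z0 : nat -> C) (t : nat) : nat -> C :=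
  match t with
  | O => z0
  | S t' => sync_step n E zobs eta t' (sync_traj n E zobs eta z0 t')
  end.

(* Write conj(z*_k) z_k(t) = c e^{i th_k(t)} with real, unwrapped angles th_k
   that receive exactly the increments applied by the algorithm.  They start in
   (-pi/2, pi/2) and never leave the interval spanned by their initial values,
   so along a good edge Log_{z_j}(z_jk z_k) is exactly th_k - th_j.  Fewer than
   a quarter of the samples at a vertex are corrupted, so the samples kept by
   the trimming lie within the range of the good ones: an update moves th_j a
   fraction eta towards the range [min th, max th], and strictly inside it by a
   definite amount when half of the neighbours lie below (above) some level.
   Starting from the side of the midpoint holding at most half of the vertices,
   the cut condition lets the gap to the extreme value reach one more vertex per
   sweep of n updates, so after n sweeps the range shrinks by a fixed factor
   1 - g.  Since delta(z(t)) is at most the range, it decays geometrically on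
   every graph satisfying the hypotheses. *)

From Stdlib Require Import Reals List Lra Lia ClassicalEpsilon.
From Coquelicot Require Import Coquelicot.
Import ListNotations.
Open Scope R_scope.

Lemma Rleb_true a b : Rleb a b = true <-> a <= b.
Proof. unfold Rleb; destruct (Rle_dec a b); split; intros; auto; try lra; discriminate. Qed.

Lemma Rleb_false a b : Rleb a b = false <-> b < a.
Proof. unfold Rleb; destruct (Rle_dec a b); split; intros; auto; try lra; discriminate. Qed.

Lemma filter_length_mono {A} (f g : A -> bool) l :
  (forall x, In x l -> f x = true -> g x = true) ->
  (length (filter f l) <= length (filter g l))%nat.
Proof.
  induction l as [|a l IH]; simpl; intros H; auto.
  destruct (f a) eqn:Ef.
  - rewrite (H a (or_introl eq_refl) Ef); simpl.
    apply le_n_S, IH; intros; apply H; auto.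
  - destruct (g a); simpl; [apply le_S|]; apply IH; intros; apply H; auto.
Qed.

Lemma filter_length_lt {A} (f g : A -> bool) l x :
  (forall x, In x l -> f x = true -> g x = true) ->
  In x l -> g x = true -> f x = false ->
  (length (filter f l) < length (filter g l))%nat.
Proof.
  induction l as [|a l IH]; simpl; intros H Hx Hg Hf; [contradiction|].
  assert (Hl := filter_length_mono f g l (fun y Hy => H y (or_intror Hy))).
  destruct Hx as [<-|Hx].
  - rewrite Hg, Hf; simpl; lia.
  - assert (IH' := IH (fun y Hy => H y (or_intror Hy)) Hx Hg Hf).
    destruct (f a) eqn:Ef.
    + rewrite (H a (or_introl eq_refl) Ef); simpl; lia.
    + destruct (g a); simpl; lia.
Qed.

Lemma filter_length_le_except {A} (f g b : A -> bool) l :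
  (forall x, In x l -> b x = false -> f x = true -> g x = true) ->
  (length (filter f l) <= length (filter g l) + length (filter b l))%nat.
Proof.
  induction l as [|a l IH]; simpl; intros H; auto.
  assert (IH' := IH (fun y Hy => H y (or_intror Hy))).
  specialize (H a (or_introl eq_refl)).
  destruct (f a), (g a), (b a); simpl; lia.
Qed.

Lemma filter_length_all {A} (f : A -> bool) l :
  (forall x, In x l -> f x = true) -> length (filter f l) = length l.
Proof.
  induction l as [|a l IH]; simpl; intros H; auto.
  rewrite (H a (or_introl eq_refl)); simpl; rewrite IH; auto.
Qed.

Lemma filter_length_zero {A} (f : A -> bool) l x :
  length (filter f l) = 0%nat -> In x l -> f x = false.
Proof.
  intros H Hx. destruct (f x) eqn:E; auto.
  assert (Hin : In x (filter f l)) by (apply filter_In; auto).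
  destruct (filter f l); simpl in *; [contradiction|discriminate].
Qed.

Lemma filter_length_map {A B} (f : B -> bool) (g : A -> B) l :
  length (filter f (map g l)) = length (filter (fun x => f (g x)) l).
Proof. rewrite filter_map_swap, length_map; reflexivity. Qed.

Lemma exists_max (l : list R) : l <> [] -> exists y, In y l /\ forall x, In x l -> x <= y.
Proof.
  induction l as [|a l IH]; intros H; [congruence|].
  destruct l as [|b l'].
  - exists a; simpl; split; auto. intros x [<-|[]]; lra.
  - destruct IH as [y [Hy1 Hy2]]; [discriminate|].
    destruct (Rle_dec a y).
    + exists y; split; [right; auto|]. intros x [<-|Hx]; auto.
    + exists a; split; [left; auto|]. intros x [<-|Hx]; [lra|]. specialize (Hy2 x Hx); lra.
Qed.

Lemma fold_Rmin_In x r : In (fold_right Rmin x r) (x :: r).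
Proof.
  induction r as [|a r IH]; simpl; auto.
  destruct (Rle_dec a (fold_right Rmin x r)).
  - rewrite Rmin_left; auto.
  - rewrite Rmin_right; [|lra]. destruct IH as [H|H]; auto.
Qed.

Lemma fold_Rmin_le x r y : In y (x :: r) -> fold_right Rmin x r <= y.
Proof.
  induction r as [|a r IH]; simpl; intros Hy.
  - destruct Hy as [<-|[]]; lra.
  - destruct Hy as [Hy|[Hy|Hy]]; subst; try apply Rmin_l;
      (eapply Rle_trans; [apply Rmin_r|]; apply IH; simpl; auto).
Qed.

Lemma fold_Rmax_ge x l : In x l -> x <= fold_right Rmax 0 l.
Proof.
  induction l as [|a l IH]; simpl; [tauto|]. intros [<-|H].
  - apply Rmax_l.
  - eapply Rle_trans; [apply IH; auto| apply Rmax_r].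
Qed.

Lemma fold_Rmax_le B l : 0 <= B -> (forall x, In x l -> x <= B) -> fold_right Rmax 0 l <= B.
Proof. intros HB. induction l as [|a l IH]; simpl; intros H; auto. apply Rmax_lub; auto. Qed.

Lemma fold_Rmax_nonneg l : 0 <= fold_right Rmax 0 l.
Proof. induction l as [|a l IH]; simpl; [lra|]. eapply Rle_trans; [apply IH|apply Rmax_r]. Qed.

Section Quantile.
Variables (X : list R) (p : R).
Hypothesis Hp : 0 < p <= 1.
Hypothesis HX : X <> [].

Lemma quantile_spec :
  In (quantile p X) X /\ p * INR (length X) <= INR (count_le (quantile p X) X) /\
  forall y, In y X -> p * INR (length X) <= INR (count_le y X) -> quantile p X <= y.
Proof.
  unfold quantile.
  set (F := filter _ X).
  assert (HF : F <> []).
  { destruct (exists_max X HX) as [y [Hy1 Hy2]].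
    assert (In y F).
    { unfold F; apply filter_In; split; auto. apply Rleb_true.
      unfold count_le; rewrite filter_length_all.
      - assert (0 <= INR (length X)) by apply pos_INR. nra.
      - intros x Hx; apply Rleb_true; auto. }
    destruct F; simpl in *; [contradiction|discriminate]. }
  destruct F as [|x r] eqn:EF; [congruence|].
  pose proof (fold_Rmin_In x r) as Hin.
  rewrite <- EF in Hin. unfold F in Hin. apply filter_In in Hin as [Hin1 Hin2].
  apply Rleb_true in Hin2.
  split; [auto|split; [auto|]].
  intros y Hy Hc. apply fold_Rmin_le. rewrite <- EF. unfold F. apply filter_In; split; auto.
  apply Rleb_true; auto.
Qed.

Lemma quantile_le y :
  0 < p * INR (length X) -> p * INR (length X) <= INR (count_le y X) -> quantile p X <= y.
Proof.
  intros Hpos Hc.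
  set (Y := filter (fun x => Rleb x y) X).
  assert (HY : Y <> []).
  { intros E. unfold count_le in Hc. fold Y in Hc. rewrite E in Hc. simpl in Hc. lra. }
  destruct (exists_max Y HY) as [w [Hw1 Hw2]].
  unfold Y in Hw1; apply filter_In in Hw1 as [Hw1 Hw3]. apply Rleb_true in Hw3.
  assert (Hcw : count_le w X = count_le y X).
  { unfold count_le; f_equal; apply filter_ext_in. intros a Ha.
    destruct (Rleb a y) eqn:E1.
    - apply Rleb_true; apply Hw2; unfold Y; apply filter_In; auto.
    - apply Rleb_false in E1. apply Rleb_false. lra. }
  destruct quantile_spec as [_ [_ Hmin]].
  apply Rle_trans with w; auto. apply Hmin; auto. rewrite Hcw; auto.
Qed.
End Quantile.

Lemma INR_length_pos {A} (l : list A) : l <> [] -> 0 < INR (length l).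
Proof. intros Hl. apply lt_0_INR. destruct l; [congruence|]. simpl; lia. Qed.

Lemma sum_le_length_mul l hi : (forall x, In x l -> x <= hi) ->
  fold_right Rplus 0 l <= INR (length l) * hi.
Proof.
  induction l as [|a l IH]; intros H; [simpl; lra|].
  rewrite length_cons, S_INR; simpl.
  assert (a <= hi) by (apply H; left; auto).
  assert (fold_right Rplus 0 l <= INR (length l) * hi) by (apply IH; intros; apply H; right; auto).
  lra.
Qed.

Lemma sum_le_of_mem l hi x0 : (forall x, In x l -> x <= hi) -> In x0 l ->
  fold_right Rplus 0 l <= (INR (length l) - 1) * hi + x0.
Proof.
  induction l as [|a l IH]; intros H Hx; [contradiction|].
  rewrite length_cons, S_INR; simpl.
  assert (Ha : a <= hi) by (apply H; left; auto).
  destruct Hx as [<-|Hx].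
  - assert (fold_right Rplus 0 l <= INR (length l) * hi)
      by (apply sum_le_length_mul; intros; apply H; right; auto).
    lra.
  - assert (fold_right Rplus 0 l <= (INR (length l) - 1) * hi + x0)
      by (apply IH; auto; intros; apply H; right; auto).
    lra.
Qed.

Lemma sum_map_Ropp l : fold_right Rplus 0 (map Ropp l) = - fold_right Rplus 0 l.
Proof. induction l as [|a l IH]; simpl; [lra|]. rewrite IH; lra. Qed.

Lemma ave_le_of_mem l hi x0 : (forall x, In x l -> x <= hi) -> In x0 l ->
  ave l <= hi - (hi - x0) / INR (length l).
Proof.
  intros H Hx. pose proof (sum_le_of_mem l hi x0 H Hx).
  assert (Hl : 0 < INR (length l)) by (apply INR_length_pos; intros ->; contradiction).
  unfold ave. apply Rmult_le_reg_r with (INR (length l)); auto.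
  field_simplify; lra.
Qed.

Lemma ave_ge_of_mem l lo x0 : (forall x, In x l -> lo <= x) -> In x0 l ->
  lo + (x0 - lo) / INR (length l) <= ave l.
Proof.
  intros H Hx.
  assert (Hneg : forall x, In x (map Ropp l) -> x <= - lo).
  { intros x Hx'. apply in_map_iff in Hx' as [y [<- Hy]]. specialize (H y Hy); lra. }
  pose proof (ave_le_of_mem (map Ropp l) (- lo) (- x0) Hneg (in_map Ropp l x0 Hx)) as Hm.
  unfold ave in *. rewrite length_map, sum_map_Ropp in Hm. unfold Rdiv in *. lra.
Qed.

Lemma INR_mul4_lt a b : (4 * a < b)%nat -> 4 * INR a < INR b.
Proof. intros H. apply lt_INR in H. rewrite mult_INR in H. simpl in H. lra. Qed.

Lemma Rdiv_le_compat a b x y : 0 <= a <= b -> 0 < x <= y -> a / y <= b / x.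
Proof.
  intros Hab Hxy. unfold Rdiv.
  apply Rmult_le_compat; [lra| left; apply Rinv_0_lt_compat; lra| lra|].
  apply Rinv_le_contravar; lra.
Qed.

Section TrimmedMean.
Variable X : list R.
Let q1 := quantile (1/4) X.
Let q3 := quantile (3/4) X.

Lemma trim25_In x : In x (trim25 X) <-> In x X /\ q1 <= x <= q3.
Proof.
  unfold trim25. fold q1 q3. rewrite filter_In, Bool.andb_true_iff, !Rleb_true. tauto.
Qed.

Lemma length_trim25 : (length (trim25 X) <= length X)%nat.
Proof. apply filter_length_le. Qed.

Hypothesis HX : X <> [].

Lemma q1_spec : In q1 X /\ 1/4 * INR (length X) <= INR (count_le q1 X).
Proof. destruct (quantile_spec X (1/4) ltac:(lra) HX) as [H1 [H2 _]]; auto. Qed.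

Lemma q3_spec : In q3 X /\ 3/4 * INR (length X) <= INR (count_le q3 X).
Proof. destruct (quantile_spec X (3/4) ltac:(lra) HX) as [H1 [H2 _]]; auto. Qed.

Lemma q1_le_q3 : q1 <= q3.
Proof.
  destruct (quantile_spec X (1/4) ltac:(lra) HX) as [_ [_ Hmin]].
  destruct q3_spec as [H3 H3']. pose proof (INR_length_pos X HX). apply Hmin; auto. lra.
Qed.

Lemma q1_In_trim25 : In q1 (trim25 X).
Proof. apply trim25_In. pose proof q1_le_q3. destruct q1_spec. split; auto; lra. Qed.

Lemma q3_In_trim25 : In q3 (trim25 X).
Proof. apply trim25_In. pose proof q1_le_q3. destruct q3_spec. split; auto; lra. Qed.

Lemma q1_le L : (length X < 4 * count_le L X)%nat -> q1 <= L.
Proof.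
  intros H. apply lt_INR in H. rewrite mult_INR in H. simpl (INR 4) in H.
  pose proof (INR_length_pos X HX). apply quantile_le; auto; lra.
Qed.

Lemma q3_le hi : (4 * length (filter (fun x => negb (Rleb x hi)) X) < length X)%nat -> q3 <= hi.
Proof.
  intros H. apply INR_mul4_lt in H.
  pose proof (f_equal INR (filter_length (fun x => Rleb x hi) X)) as Hc. rewrite plus_INR in Hc.
  pose proof (INR_length_pos X HX). apply quantile_le; auto; unfold count_le; lra.
Qed.

Lemma ge_q1 lo : (4 * length (filter (fun x => negb (Rleb lo x)) X) < length X)%nat -> lo <= q1.
Proof.
  intros H. apply INR_mul4_lt in H. destruct (Rle_dec lo q1) as [|Hn]; auto. exfalso.
  destruct q1_spec as [_ Hc].
  assert (Hsub : (count_le q1 X <= length (filter (fun x => negb (Rleb lo x)) X))%nat).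
  { apply filter_length_mono. intros x _ Hx. apply Rleb_true in Hx.
    apply Bool.negb_true_iff, Rleb_false. lra. }
  apply le_INR in Hsub. lra.
Qed.

Lemma ge_q3 U : (length X < 4 * length (filter (fun x => Rleb U x) X))%nat -> U <= q3.
Proof.
  intros H. apply lt_INR in H. rewrite mult_INR in H. simpl (INR 4) in H.
  destruct (Rle_dec U q3) as [|Hn]; auto. exfalso.
  destruct q3_spec as [_ Hc].
  assert (Hsub : (count_le q3 X <= length (filter (fun x => negb (Rleb U x)) X))%nat).
  { apply filter_length_mono. intros x _ Hx. apply Rleb_true in Hx.
    apply Bool.negb_true_iff, Rleb_false. lra. }
  pose proof (f_equal INR (filter_length (fun x => Rleb U x) X)) as Hc2. rewrite plus_INR in Hc2.
  apply le_INR in Hsub. lra.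
Qed.

Lemma trim25_nonempty : trim25 X <> [].
Proof. intros ET. pose proof q1_In_trim25 as Hq. rewrite ET in Hq. contradiction. Qed.
End TrimmedMean.

(* Both quartiles survive the trimming: [q3 <= hi] bounds every kept sample,
   and the kept sample [q1 <= L] pulls the mean down. *)
Lemma ave_trim25_le X hi L :
  (4 * length (filter (fun x => negb (Rleb x hi)) X) < length X)%nat ->
  (length X < 4 * count_le L X)%nat -> L <= hi ->
  ave (trim25 X) <= hi - (hi - L) / INR (length X).
Proof.
  intros Hhi HL HLhi.
  assert (HX : X <> []) by (intros ->; simpl in Hhi; lia).
  pose proof (q3_le X HX hi Hhi). pose proof (q1_le X HX L HL).
  assert (Hbnd : forall x, In x (trim25 X) -> x <= hi) by (intros x Hx; apply trim25_In in Hx; lra).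
  pose proof (ave_le_of_mem _ hi _ Hbnd (q1_In_trim25 X HX)).
  pose proof (INR_length_pos _ (trim25_nonempty X HX)).
  pose proof (le_INR _ _ (length_trim25 X)).
  pose proof (Rdiv_le_compat (hi - L) (hi - quantile (1/4) X)
                (INR (length (trim25 X))) (INR (length X)) ltac:(lra) ltac:(lra)).
  lra.
Qed.

Lemma ave_trim25_ge X lo U :
  (4 * length (filter (fun x => negb (Rleb lo x)) X) < length X)%nat ->
  (length X < 4 * length (filter (fun x => Rleb U x) X))%nat -> lo <= U ->
  lo + (U - lo) / INR (length X) <= ave (trim25 X).
Proof.
  intros Hlo HU HlU.
  assert (HX : X <> []) by (intros ->; simpl in Hlo; lia).
  pose proof (ge_q1 X HX lo Hlo). pose proof (ge_q3 X HX U HU).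
  assert (Hbnd : forall x, In x (trim25 X) -> lo <= x) by (intros x Hx; apply trim25_In in Hx; lra).
  pose proof (ave_ge_of_mem _ lo _ Hbnd (q3_In_trim25 X HX)).
  pose proof (INR_length_pos _ (trim25_nonempty X HX)).
  pose proof (le_INR _ _ (length_trim25 X)).
  pose proof (Rdiv_le_compat (U - lo) (quantile (3/4) X - lo)
                (INR (length (trim25 X))) (INR (length X)) ltac:(lra) ltac:(lra)).
  lra.
Qed.

Definition cis (a : R) : C := (cos a, sin a).

Lemma cis_add a b : Cmult (cis a) (cis b) = cis (a + b).
Proof. unfold cis, Cmult; simpl. rewrite cos_plus, sin_plus. f_equal; ring. Qed.

Lemma Cconj_cis a : Cconj (cis a) = cis (- a).
Proof. unfold cis, Cconj; simpl. rewrite cos_neg, sin_neg. auto. Qed.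

Lemma Cmod_cis a : Cmod (cis a) = 1.
Proof.
  unfold Cmod, cis; cbn [fst snd].
  replace (cos a ^ 2 + sin a ^ 2) with 1 by (pose proof (sin2_cos2 a); unfold Rsqr in *; nra).
  apply sqrt_1.
Qed.

Lemma Cmult_conj_unit c : Cmod c = 1 -> Cmult c (Cconj c) = 1%C.
Proof. intros H. rewrite <- Cmod2_conj, H. f_equal. simpl. ring. Qed.

Lemma Cmod_unit_cis z : Cmod z = 1 -> exists a, - PI < a <= PI /\ z = cis a.
Proof.
  destruct z as [x y]. unfold Cmod; simpl. intros H.
  assert (Hs : x * (x * 1) + y * (y * 1) = 1).
  { rewrite <- (sqrt_sqrt (x * (x * 1) + y * (y * 1))); [rewrite H; ring| nra]. }
  assert (Hx : -1 <= x <= 1) by nra.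
  assert (H1 : 1 - x² = y²) by (unfold Rsqr; lra).
  pose proof (acos_bound x).
  destruct (Rle_dec 0 y) as [Hy|Hy].
  - exists (acos x). split; [pose proof PI_RGT_0; lra|].
    unfold cis. rewrite cos_acos, sin_acos by auto. rewrite H1, sqrt_Rsqr; auto.
  - exists (- acos x). split.
    + assert (-1 < x < 1) by nra. pose proof (acos_bound_lt x H2). lra.
    + unfold cis. rewrite cos_neg, sin_neg, cos_acos, sin_acos by auto.
      rewrite H1, sqrt_Rsqr_abs, Rabs_left by lra. f_equal; ring.
Qed.

Lemma arg_spec z : Cmod z = 1 -> - PI < arg z <= PI /\ z = cis (arg z).
Proof.
  intros H. unfold arg.
  destruct (epsilon_spec (inhabits 0%R)
    (fun th => - PI < th <= PI /\ z = Cmult (RtoC (Cmod z)) (cos th, sin th))) as [H1 H2].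
  { destruct (Cmod_unit_cis z H) as [a [Ha1 Ha2]]. exists a. split; auto.
    rewrite H. fold (cis a). rewrite <- Ha2. ring. }
  split; auto. set (e := epsilon _ _) in *. rewrite H in H2. unfold cis. rewrite H2 at 1. ring.
Qed.

Lemma cis_inj a b : - PI < a <= PI -> - PI < b <= PI -> cis a = cis b -> a = b.
Proof.
  intros Ha Hb E. unfold cis in E. injection E as E1 E2.
  set (u := (a - b) / 2).
  assert (Hc : cos (2 * u) = 1).
  { unfold u. replace (2 * ((a - b) / 2)) with (a - b) by field.
    rewrite cos_minus, E1, E2. pose proof (sin2_cos2 b). unfold Rsqr in H. lra. }
  rewrite cos_2a_sin in Hc.
  assert (Hs : sin u = 0) by nra.
  pose proof PI_RGT_0.
  destruct (Rtotal_order u 0) as [Hl|[He|Hg]].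
  - assert (0 < sin (- u)) by (apply sin_gt_0; unfold u in *; lra).
    rewrite sin_neg in H0. lra.
  - unfold u in He. lra.
  - assert (0 < sin u) by (apply sin_gt_0; unfold u in *; lra). lra.
Qed.

Lemma arg_cis a : - PI < a <= PI -> arg (cis a) = a.
Proof. intros Ha. destruct (arg_spec (cis a) (Cmod_cis a)) as [H1 H2]. apply cis_inj; auto. Qed.

Lemma rotated_cis_mult_conj c a b : Cmod c = 1 ->
  Cmult (Cmult c (cis a)) (Cconj (Cmult c (cis b))) = cis (a - b).
Proof.
  intros Hc. rewrite Cmult_conj, Cconj_cis.
  transitivity (Cmult (Cmult c (Cconj c)) (Cmult (cis a) (cis (- b)))); [ring|].
  rewrite Cmult_conj_unit, cis_add by auto. replace (a + - b) with (a - b) by ring. ring.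
Qed.

Lemma arg_rotated_cis_mult_conj c a b : Cmod c = 1 -> - PI < a - b < PI ->
  arg (Cmult (Cmult c (cis a)) (Cconj (Cmult c (cis b)))) = a - b.
Proof. intros Hc Hab. rewrite rotated_cis_mult_conj by auto. apply arg_cis. lra. Qed.

Lemma arg_of_dangle_lt e c : Cmod e = 1 -> Cmod c = 1 -> dangle c e < PI / 2 ->
  - PI / 2 < arg (Cmult e (Cconj c)) < PI / 2.
Proof.
  intros He Hc Hd.
  assert (Hw : Cmod (Cmult e (Cconj c)) = 1) by (rewrite Cmod_mult, Cmod_conj, He, Hc; ring).
  destruct (arg_spec _ Hw) as [Ha Hw2]. set (a := arg (Cmult e (Cconj c))) in *.
  assert (Hce : Cmult c (Cconj e) = cis (- a)).
  { rewrite <- Cconj_cis, <- Hw2, Cmult_conj, Cconj_conj. ring. }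
  unfold dangle in Hd. rewrite Hce in Hd. pose proof PI_RGT_0.
  destruct (Req_dec a PI) as [Ea|Ea].
  - exfalso. assert (Hpi : cis (- a) = cis PI).
    { rewrite Ea. unfold cis. rewrite cos_neg, sin_neg, sin_PI. f_equal. ring. }
    rewrite Hpi, arg_cis, Rabs_pos_eq in Hd; lra.
  - rewrite arg_cis in Hd by lra. apply Rabs_def2 in Hd. lra.
Qed.

Lemma in_vertices n k : In k (vertices n) <-> (k < n)%nat.
Proof. unfold vertices. rewrite in_seq. lia. Qed.

Lemma in_nbrs n E j k : In k (nbrs n E j) <-> (k < n)%nat /\ E j k = true.
Proof. unfold nbrs. rewrite filter_In, in_vertices. tauto. Qed.

Lemma length_nbrs_le n E j : (length (nbrs n E j) <= n)%nat.
Proof. unfold nbrs, vertices. rewrite <- (length_seq n 0) at 2. apply filter_length_le. Qed.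

Lemma pow_le_one x k : 0 <= x <= 1 -> x ^ k <= 1.
Proof. intros H. induction k; simpl; [lra|]. assert (0 <= x ^ k) by (apply pow_le; lra). nra. Qed.

(* Only the upper side is stated; lower bounds come from applying it to [- th]. *)
Definition damped_majority_le (n : nat) (E : nat -> nat -> bool) (eta : R)
    (th : nat -> nat -> R) : Prop :=
  forall t M L, (forall k, (k < n)%nat -> th t k <= M) -> L <= M ->
  (length (nbrs n E (t mod n))
     <= 2 * length (filter (fun k => Rleb (th t k) L) (nbrs n E (t mod n))))%nat ->
  th (S t) (t mod n)
    <= (1 - eta) * th t (t mod n)
       + eta * (M - (M - L) / INR (length (nbrs n E (t mod n)))).

Definition expanding_cuts (n : nat) (E : nat -> nat -> bool) : Prop :=
  forall J : nat -> bool,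
    (exists j, (j < n)%nat /\ J j = true) ->
    (2 * length (filter J (vertices n)) <= n)%nat ->
    exists j, (j < n)%nat /\ J j = true /\
      (length (filter (fun k => J k) (nbrs n E j))
       < length (filter (fun k => negb (J k)) (nbrs n E j)))%nat.

Definition count_above (n : nat) (x : nat -> R) (a : R) : nat :=
  length (filter (fun k => negb (Rleb (x k) a)) (vertices n)).

Definition sweep_rate (n : nat) (eta : R) : R := eta * (1 - eta) ^ n / INR n.

Lemma sweep_rate_bounds n eta : (0 < n)%nat -> 0 < eta < 1 ->
  0 < sweep_rate n eta <= (1 - eta) ^ n.
Proof.
  intros Hn Heta. unfold sweep_rate.
  assert (Hn1 : 1 <= INR n) by (apply (le_INR 1); lia).
  assert (Hp : 0 < (1 - eta) ^ n) by (apply pow_lt; lra).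
  split.
  - apply Rdiv_lt_0_compat; [apply Rmult_lt_0_compat|]; lra.
  - apply Rmult_le_reg_r with (INR n); [lra|]. field_simplify; nra.
Qed.

Section Sweep.
Variables (n : nat) (E : nat -> nat -> bool) (eta : R) (th : nat -> nat -> R).
Hypothesis Hn : (0 < n)%nat.
Hypothesis Heta : 0 < eta < 1.
Hypothesis th_frozen : forall t k, k <> (t mod n)%nat -> th (S t) k = th t k.
Hypothesis th_pull : damped_majority_le n E eta th.
Hypothesis Hcut : expanding_cuts n E.

Let gamma := sweep_rate n eta.

Lemma damped_step t M : (forall k, (k < n)%nat -> th t k <= M) ->
  forall k, (k < n)%nat -> th (S t) k <= (1 - eta) * th t k + eta * M.
Proof using Heta th_frozen th_pull.
  intros HM k Hk. destruct (Nat.eq_dec k (t mod n)) as [->|Hkj].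
  - assert (Hall : length (filter (fun k => Rleb (th t k) M) (nbrs n E (t mod n)))
                   = length (nbrs n E (t mod n))).
    { apply filter_length_all. intros i Hi. apply Rleb_true, HM, (in_nbrs n E (t mod n)), Hi. }
    assert (H := th_pull t M M HM (Rle_refl M)).
    rewrite Hall in H. specialize (H (Nat.le_add_r _ _)).
    replace (M - (M - M) / INR (length (nbrs n E (t mod n)))) with M in H
      by (unfold Rdiv; ring).
    exact H.
  - rewrite th_frozen by auto. pose proof (HM k Hk). nra.
Qed.

Lemma gap_decay s t M : (forall k, (k < n)%nat -> th t k <= M) ->
  (forall k, (k < n)%nat -> th (t + s)%nat k <= M) /\
  forall k, (k < n)%nat -> (1 - eta) ^ s * (M - th t k) <= M - th (t + s)%nat k.
Proof using Heta th_frozen th_pull.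
  intros HM. induction s as [|s [IH1 IH2]].
  - rewrite Nat.add_0_r. split; auto. intros; simpl; lra.
  - rewrite Nat.add_succ_r.
    split; intros k Hk; pose proof (damped_step _ _ IH1 k Hk); pose proof (IH1 k Hk).
    + nra.
    + pose proof (IH2 k Hk). assert (0 <= M - th t k) by (pose proof (HM k Hk); lra).
      assert (0 <= (1 - eta) ^ s) by (apply pow_le; lra). simpl. nra.
Qed.

Lemma majority_progress t M L : (forall k, (k < n)%nat -> th t k <= M) -> L <= M ->
  (length (nbrs n E (t mod n))
     < 2 * length (filter (fun k => Rleb (th t k) L) (nbrs n E (t mod n))))%nat ->
  th (S t) (t mod n) <= M - eta * (M - L) / INR n.
Proof.
  intros HM HL Hmaj. assert (H := th_pull t M L HM HL ltac:(lia)).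
  set (j := (t mod n)%nat) in *.
  assert (Hj : th t j <= M) by (apply HM, Nat.mod_upper_bound; lia).
  assert (Hdj : 0 < INR (length (nbrs n E j))).
  { apply lt_0_INR. pose proof (filter_length_le (fun k => Rleb (th t k) L) (nbrs n E j)). lia. }
  assert (Hdn := le_INR _ _ (length_nbrs_le n E j)).
  pose proof (Rdiv_le_compat (M - L) (M - L) _ _ ltac:(lra) (conj Hdj Hdn)).
  unfold Rdiv in *. nra.
Qed.

Lemma sweep_progress b M G j : (forall k, (k < n)%nat -> th (n * b) k <= M) -> 0 <= G ->
  (j < n)%nat ->
  (length (nbrs n E j)
     < 2 * length (filter (fun k => Rleb (th (n * b) k) (M - G)) (nbrs n E j)))%nat ->
  th (n * S b) j <= M - gamma * G.
Proof.
  intros HM HG Hj Hmaj.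
  set (s := (n * b + j)%nat).
  assert (Hsj : (s mod n)%nat = j).
  { unfold s. rewrite Nat.add_comm, Nat.mul_comm, Nat.Div0.mod_add. apply Nat.mod_small; auto. }
  destruct (gap_decay j (n * b) M HM) as [HMs Hgap].
  fold s in HMs, Hgap.
  assert (Hpj : 0 <= (1 - eta) ^ j) by (apply pow_le; lra).
  assert (Hmaj_s : (length (nbrs n E (s mod n)) < 2 * length (filter
            (fun k => Rleb (th s k) (M - (1 - eta) ^ j * G)) (nbrs n E (s mod n))))%nat).
  { rewrite Hsj. eapply Nat.lt_le_trans; [apply Hmaj|]. apply Nat.mul_le_mono_l.
    apply filter_length_mono. intros k Hk Hle. apply in_nbrs in Hk as [Hk _].
    apply Rleb_true in Hle. apply Rleb_true. pose proof (Hgap k Hk). nra. }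
  assert (Hprog := majority_progress s M (M - (1 - eta) ^ j * G) HMs ltac:(nra) Hmaj_s).
  rewrite Hsj in Hprog.
  replace (M - (M - (1 - eta) ^ j * G)) with ((1 - eta) ^ j * G) in Hprog by ring.
  assert (HMs1 : forall k, (k < n)%nat -> th (S s) k <= M).
  { intros k Hk. pose proof (damped_step s M HMs k Hk). pose proof (HMs k Hk). nra. }
  destruct (gap_decay (n - j - 1) (S s) M HMs1) as [_ Hgap2].
  replace (S s + (n - j - 1))%nat with (n * S b)%nat in Hgap2 by (unfold s; lia).
  specialize (Hgap2 j Hj).
  assert (Hpow : (1 - eta) ^ n <= (1 - eta) ^ (n - j - 1) * (1 - eta) ^ j).
  { rewrite <- pow_add. replace n with (S (n - j - 1 + j)) at 1 by lia. simpl.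
    assert (0 <= (1 - eta) ^ (n - j - 1 + j)) by (apply pow_le; lra). nra. }
  assert (Hn1 : 0 < INR n) by (apply lt_0_INR; lia).
  assert (Hp2 : 0 <= (1 - eta) ^ (n - j - 1)) by (apply pow_le; lra).
  assert (Hchain : gamma * G <= (1 - eta) ^ (n - j - 1) * (eta * ((1 - eta) ^ j * G) / INR n)).
  { unfold gamma, sweep_rate, Rdiv.
    replace ((1 - eta) ^ (n - j - 1) * (eta * ((1 - eta) ^ j * G) * / INR n))
      with (eta * ((1 - eta) ^ (n - j - 1) * (1 - eta) ^ j) * / INR n * G) by ring.
    apply Rmult_le_compat_r; auto. apply Rmult_le_compat_r; [left; apply Rinv_0_lt_compat; lra|].
    apply Rmult_le_compat_l; lra. }
  nra.
Qed.

Lemma sweep b M G : (forall k, (k < n)%nat -> th (n * b) k <= M) -> 0 <= G ->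
  (2 * count_above n (th (n * b)) (M - G) <= n)%nat ->
  (count_above n (th (n * S b)) (M - gamma * G)
     <= count_above n (th (n * b)) (M - G) - 1)%nat.
Proof.
  intros HM HG Hhalf. unfold count_above in *.
  set (J := fun k => negb (Rleb (th (n * b) k) (M - G))) in *.
  assert (Hkeep : forall k, (k < n)%nat -> J k = false -> th (n * S b) k <= M - gamma * G).
  { intros k Hk HJ. apply Bool.negb_false_iff, Rleb_true in HJ.
    destruct (gap_decay n (n * b) M HM) as [_ Hgap].
    replace (n * b + n)%nat with (n * S b)%nat in Hgap by lia.
    pose proof (Hgap k Hk). pose proof (sweep_rate_bounds n eta Hn Heta) as Hr.
    fold gamma in Hr. nra. }
  assert (Hsub : forall k, In k (vertices n) ->
            negb (Rleb (th (n * S b) k) (M - gamma * G)) = true -> J k = true).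
  { intros k Hk Habove. apply in_vertices in Hk. destruct (J k) eqn:HJ; auto.
    apply Bool.negb_true_iff, Rleb_false in Habove. pose proof (Hkeep k Hk HJ). lra. }
  destruct (filter J (vertices n)) as [|j0 l] eqn:HJ0.
  - pose proof (filter_length_mono _ _ _ Hsub) as Hle. rewrite HJ0 in Hle. simpl in *. lia.
  - assert (Hj0 : In j0 (filter J (vertices n))) by (rewrite HJ0; left; auto).
    apply filter_In in Hj0 as [Hj0 HJj0]. apply in_vertices in Hj0.
    rewrite <- HJ0 in Hhalf |- *.
    destruct (Hcut J (ex_intro _ j0 (conj Hj0 HJj0)) Hhalf) as [j [Hj [HJj Hmaj]]].
    assert (Hprog : th (n * S b) j <= M - gamma * G).
    { apply sweep_progress; auto.
      pose proof (filter_length (fun k => J k) (nbrs n E j)).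
      eapply Nat.lt_le_trans
        with (m := (2 * length (filter (fun k => negb (J k)) (nbrs n E j)))%nat);
        [lia|].
      apply Nat.mul_le_mono_l, filter_length_mono. intros k _ Hk.
      unfold J in Hk. rewrite Bool.negb_involutive in Hk. auto. }
    assert (Hlt := filter_length_lt _ _ (vertices n) j Hsub (proj2 (in_vertices n j) Hj) HJj
                     (proj2 (Bool.negb_false_iff _) (proj2 (Rleb_true _ _) Hprog))).
    lia.
Qed.

Lemma sweeps r b M G : (forall k, (k < n)%nat -> th (n * b) k <= M) -> 0 <= G ->
  (2 * count_above n (th (n * b)) (M - G) <= n)%nat ->
  (count_above n (th (n * (b + r))) (M - gamma ^ r * G)
     <= count_above n (th (n * b)) (M - G) - r)%nat.
Proof.
  intros HM HG Hhalf. induction r as [|r IH].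
  - rewrite Nat.add_0_r, Rmult_1_l. lia.
  - assert (HMr : forall k, (k < n)%nat -> th (n * (b + r)) k <= M).
    { replace (n * (b + r))%nat with (n * b + n * r)%nat by lia. apply gap_decay; auto. }
    assert (Hg : 0 <= gamma ^ r * G).
    { apply Rmult_le_pos; auto. apply pow_le.
      pose proof (sweep_rate_bounds n eta Hn Heta) as Hr. fold gamma in Hr. lra. }
    assert (Hs := sweep (b + r) M (gamma ^ r * G) HMr Hg ltac:(lia)).
    replace (b + S r)%nat with (S (b + r)) by lia.
    replace (gamma ^ S r * G) with (gamma * (gamma ^ r * G)) by (simpl; ring).
    lia.
Qed.

Lemma top_half b M m : (forall k, (k < n)%nat -> th (n * b) k <= M) -> m <= M ->
  (2 * count_above n (th (n * b)) ((M + m) / 2) <= n)%nat ->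
  forall k, (k < n)%nat -> th (n * (b + n)) k <= M - gamma ^ n * ((M - m) / 2).
Proof.
  intros HM Hm Hhalf k Hk.
  replace ((M + m) / 2) with (M - (M - m) / 2) in Hhalf by field.
  assert (Hs := sweeps n b M ((M - m) / 2) HM ltac:(lra) Hhalf).
  assert (Hz : count_above n (th (n * (b + n))) (M - gamma ^ n * ((M - m) / 2)) = 0%nat) by lia.
  pose proof (filter_length_zero _ _ k Hz (proj2 (in_vertices n k) Hk)) as Hk'.
  apply Bool.negb_false_iff, Rleb_true in Hk'. exact Hk'.
Qed.
End Sweep.

Section TwoSided.
Variables (n : nat) (E : nat -> nat -> bool) (eta : R) (th : nat -> nat -> R).
Hypothesis Hn : (0 < n)%nat.
Hypothesis Heta : 0 < eta < 1.
Hypothesis th_frozen : forall t k, k <> (t mod n)%nat -> th (S t) k = th t k.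
Hypothesis th_pull_le : damped_majority_le n E eta th.
Hypothesis th_pull_ge : damped_majority_le n E eta (fun t k => - th t k).
Hypothesis Hcut : expanding_cuts n E.

Let g := sweep_rate n eta ^ n / 2.

Lemma neg_frozen t k : k <> (t mod n)%nat -> - th (S t) k = - th t k.
Proof. intros Hk. rewrite th_frozen; auto. Qed.

Lemma range_stable s t m M : (forall k, (k < n)%nat -> m <= th t k <= M) ->
  forall k, (k < n)%nat -> m <= th (t + s)%nat k <= M.
Proof.
  intros HR k Hk. split.
  - assert (HN : forall k, (k < n)%nat -> - th t k <= - m)
      by (intros i Hi; pose proof (HR i Hi); lra).
    pose proof (proj1 (gap_decay n E eta (fun t k => - th t k) Heta neg_frozen th_pull_ge
                         s t (- m) HN) k Hk).
    simpl in *. lra.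
  - apply (gap_decay n E eta th Heta th_frozen th_pull_le s t M); auto.
    intros i Hi. apply HR; auto.
Qed.

Lemma contraction_factor_bounds : 0 < g <= 1/2.
Proof.
  destruct (sweep_rate_bounds n eta Hn Heta) as [H0 H1].
  assert (H1' : sweep_rate n eta <= 1) by (pose proof (pow_le_one (1 - eta) n ltac:(lra)); lra).
  pose proof (pow_le_one _ n (conj (Rlt_le _ _ H0) H1')).
  pose proof (pow_lt _ n H0). unfold g. lra.
Qed.

(* Either at most half of the vertices lie strictly above the midpoint of the
   range, or at most half strictly below it; sweeping from that side shrinks
   the range by the factor [1 - g]. *)
Lemma sweep_contraction b m M : m <= M ->
  (forall k, (k < n)%nat -> m <= th (n * b) k <= M) ->
  exists m' M', M' - m' <= (1 - g) * (M - m) /\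
    forall k, (k < n)%nat -> m' <= th (n * (b + n)) k <= M'.
Proof.
  intros Hm HR.
  assert (Hstab := range_stable (n * n) (n * b) m M HR).
  replace (n * b + n * n)%nat with (n * (b + n))%nat in Hstab by lia.
  assert (Hsides : (count_above n (th (n * b)) ((M + m) / 2)
                    + count_above n (fun k => - th (n * b) k) ((- m + - M) / 2) <= n)%nat).
  { unfold count_above.
    pose proof (filter_length (fun k => negb (Rleb (th (n * b) k) ((M + m) / 2))) (vertices n)).
    unfold vertices in *. rewrite length_seq in *.
    enough (length (filter (fun k => negb (Rleb (- th (n * b) k) ((- m + - M) / 2))) (seq 0 n))
            <= length (filter (fun k => negb (negb (Rleb (th (n * b) k) ((M + m) / 2))))
                  (seq 0 n)))%nat
      by lia.
    apply filter_length_mono. intros k _ Hk.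
    apply Bool.negb_true_iff, Rleb_false in Hk.
    apply Bool.negb_true_iff, Bool.negb_false_iff, Rleb_true. lra. }
  destruct (Compare_dec.le_lt_dec (2 * count_above n (th (n * b)) ((M + m) / 2)) n) as [Hup|Hlo].
  - exists m, (M - sweep_rate n eta ^ n * ((M - m) / 2)). split; [unfold g; lra|].
    intros k Hk. split; [apply Hstab; auto|].
    apply (top_half n E eta th Hn Heta th_frozen th_pull_le Hcut b M m); auto.
    intros i Hi. apply HR; auto.
  - exists (m + sweep_rate n eta ^ n * ((M - m) / 2)), M. split; [unfold g; lra|].
    intros k Hk. split; [|apply Hstab; auto].
    assert (HN : forall k, (k < n)%nat -> - th (n * b) k <= - m)
      by (intros i Hi; pose proof (HR i Hi); lra).
    pose proof (top_half n E eta (fun t k => - th t k) Hn Heta neg_frozen th_pull_ge Hcut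
                  b (- m) (- M) HN ltac:(lra) ltac:(lia) k Hk).
    simpl in *. lra.
Qed.

Lemma range_contraction t m0 M0 : m0 <= M0 ->
  (forall k, (k < n)%nat -> m0 <= th 0 k <= M0) ->
  exists m M, M - m <= (1 - g) ^ (t / (n * n)) * (M0 - m0) /\
    forall k, (k < n)%nat -> m <= th t k <= M.
Proof.
  intros Hm0 H0. pose proof contraction_factor_bounds.
  assert (Hblocks : forall p, exists m M, m <= M /\ M - m <= (1 - g) ^ p * (M0 - m0) /\
            forall k, (k < n)%nat -> m <= th (n * (n * p)) k <= M).
  { induction p as [|p [m [M [Hm [Hspread HR]]]]].
    - exists m0, M0. rewrite !Nat.mul_0_r. simpl. split; [lra|]. split; [lra|auto].
    - destruct (sweep_contraction (n * p) m M Hm HR) as [m' [M' [Hs HR']]].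
      exists m', M'. split; [pose proof (HR' 0%nat Hn); lra|]. split.
      + simpl. nra.
      + replace (n * (n * S p))%nat with (n * (n * p + n))%nat by lia. auto. }
  destruct (Hblocks (t / (n * n))%nat) as [m [M [_ [Hspread HR]]]].
  exists m, M. split; auto.
  assert (Ht : t = (n * (n * (t / (n * n))) + t mod (n * n))%nat).
  { rewrite Nat.mul_assoc. apply Nat.div_mod_eq. }
  rewrite Ht. apply range_stable; auto.
Qed.
End TwoSided.

Lemma bernoulli_ineq a N : 0 <= a <= 1 -> 1 - INR N * a <= (1 - a) ^ N.
Proof.
  intros H. induction N as [|N IH]; [simpl; lra|]. rewrite S_INR. simpl.
  assert (0 <= (1 - a) ^ N) by (apply pow_le; lra).
  assert (0 <= INR N) by apply pos_INR. nra.
Qed.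

(* Decay by [1 - g] per block of [N] steps is geometric with ratio [1 - g/N],
   since [(1 - g/N)^N >= 1 - g] by Bernoulli's inequality. *)
Lemma geometric_of_block_decay (u : nat -> R) g N D : 0 < g < 1 -> (0 < N)%nat -> 0 <= D ->
  (forall t, u t <= (1 - g) ^ (t / N) * D) ->
  exists K rho, 0 <= K /\ 0 <= rho < 1 /\ forall t, u t <= K * rho ^ t.
Proof.
  intros Hg HN HD Hu.
  assert (HN1 : 1 <= INR N) by (apply (le_INR 1); lia).
  set (rho := 1 - g / INR N).
  assert (Hgn : 0 < g / INR N <= g).
  { split; [apply Rdiv_lt_0_compat; lra|].
    apply Rmult_le_reg_r with (INR N); [lra|]. field_simplify; nra. }
  assert (Hrho : 0 < rho < 1) by (unfold rho; lra).
  assert (HB : 1 - g <= rho ^ N).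
  { pose proof (bernoulli_ineq (g / INR N) N ltac:(lra)). unfold rho.
    replace (INR N * (g / INR N)) with g in H by (field; lra). lra. }
  assert (HrN : 0 < rho ^ N) by (apply pow_lt; lra).
  exists (D / rho ^ N), rho. split; [apply Rdiv_le_0_compat; lra|]. split; [lra|].
  intros t. eapply Rle_trans; [apply Hu|].
  set (p := (t / N)%nat). set (r := (t mod N)%nat).
  assert (Ht : t = (N * p + r)%nat) by apply Nat.div_mod_eq.
  assert (Hr : (r < N)%nat) by (apply Nat.mod_upper_bound; lia).
  assert (H1 : (1 - g) ^ p <= rho ^ (N * p)) by (rewrite pow_mult; apply pow_incr; lra).
  assert (H2 : rho ^ N <= rho ^ r).
  { replace N with (r + (N - r))%nat at 1 by lia. rewrite pow_add.
    assert (0 <= rho ^ r) by (apply pow_le; lra).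
    assert (rho ^ (N - r) <= 1) by (apply pow_le_one; lra). nra. }
  assert (H3 : rho ^ (N * p) * rho ^ N <= rho ^ t).
  { rewrite Ht, pow_add. apply Rmult_le_compat_l; [apply pow_le; lra| auto]. }
  apply Rmult_le_reg_r with (rho ^ N); auto.
  replace (D / rho ^ N * rho ^ t * rho ^ N) with (D * rho ^ t) by (field; lra).
  replace ((1 - g) ^ p * D * rho ^ N) with (D * ((1 - g) ^ p * rho ^ N)) by ring.
  apply Rmult_le_compat_l; auto. eapply Rle_trans; [|apply H3].
  apply Rmult_le_compat_r; lra.
Qed.

Lemma is_lim_seq_0_of_geometric (u : nat -> R) K rho : 0 <= rho < 1 ->
  (forall t, 0 <= u t <= K * rho ^ t) -> is_lim_seq u 0.
Proof.
  intros Hrho Hu.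
  apply is_lim_seq_le_le with (u := fun _ => 0) (w := fun t => K * rho ^ t); auto.
  - apply is_lim_seq_const.
  - assert (Hl : Rabs rho < 1) by (rewrite Rabs_pos_eq; lra).
    pose proof (is_lim_seq_scal_l _ K _ (is_lim_seq_geom rho Hl)) as HL.
    simpl in HL. rewrite Rmult_0_r in HL. exact HL.
Qed.

Section Lift.
Variables (n : nat) (E Eb : nat -> nat -> bool) (zstar : nat -> C) (zobs : nat -> nat -> C).
Variables (z0 : nat -> C) (c : C) (eta m0 M0 : R).
Hypothesis Hn : (0 < n)%nat.
Hypothesis HEb_sub : forall j k, Eb j k = true -> E j k = true.
Hypothesis Hzstar : forall j, (j < n)%nat -> Cmod (zstar j) = 1.
Hypothesis Hgood : forall j k, E j k = true -> Eb j k = false ->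
             zobs j k = Cmult (zstar j) (Cconj (zstar k)).
Hypothesis Halpha : alpha0 n E Eb < 1/4.
Hypothesis Hz0 : forall j, (j < n)%nat -> Cmod (z0 j) = 1.
Hypothesis Hc : Cmod c = 1.
Hypothesis Heta : 0 < eta < 1.
Hypothesis Hm0 : - PI / 2 < m0.
Hypothesis HM0 : M0 < PI / 2.

Let traj := sync_traj n E zobs eta z0.

Definition sample (t k : nat) : R :=
  LogC (traj t (t mod n)) (Cmult (zobs (t mod n) k) (traj t k)).

Definition samples (t : nat) : list R := map (sample t) (nbrs n E (t mod n)).

(* Unwrapped angles: [c * cis (lift t k)] is [conj (zstar k) * z_k(t)], but the
   increments are accumulated in [R] instead of being reduced modulo [2 PI]. *)
Fixpoint lift (t : nat) : nat -> R :=
  match t with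
  | O => fun k => arg (Cmult (Cmult (Cconj (zstar k)) (z0 k)) (Cconj c))
  | S t' => fun k =>
      if Nat.eqb k (t' mod n) then lift t' k + eta * ave (trim25 (samples t'))
      else lift t' k
  end.

Lemma lift_updated t : lift (S t) (t mod n) = lift t (t mod n) + eta * ave (trim25 (samples t)).
Proof. simpl. rewrite Nat.eqb_refl. reflexivity. Qed.

Lemma lift_frozen t k : k <> (t mod n)%nat -> lift (S t) k = lift t k.
Proof. intros Hk. simpl. apply Nat.eqb_neq in Hk. rewrite Hk. reflexivity. Qed.

Lemma lift_spec t k : (k < n)%nat -> Cmult (Cconj (zstar k)) (traj t k) = Cmult c (cis (lift t k)).
Proof.
  intros Hk. induction t as [|t IH].
  - simpl lift. change (traj 0 k) with (z0 k).
    set (e := Cmult (Cconj (zstar k)) (z0 k)).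
    assert (He : Cmod (Cmult e (Cconj c)) = 1).
    { unfold e. rewrite !Cmod_mult, !Cmod_conj, Hzstar, Hz0, Hc by auto. ring. }
    destruct (arg_spec _ He) as [_ Harg]. rewrite <- Harg.
    transitivity (Cmult e (Cmult c (Cconj c))); [rewrite Cmult_conj_unit by auto| ]; ring.
  - change (traj (S t) k) with (sync_step n E zobs eta t (traj t) k).
    unfold sync_step. fold (sample t). fold (samples t).
    destruct (Nat.eq_dec k (t mod n)) as [Ek|Ek].
    + subst k. rewrite Nat.eqb_refl, lift_updated, <- cis_add. unfold ExpC.
      transitivity (Cmult (cis (eta * ave (trim25 (samples t))))
                      (Cmult (Cconj (zstar (t mod n))) (traj t (t mod n))));
        [unfold cis; ring|].
      rewrite IH. ring.
    + rewrite lift_frozen by auto. apply Nat.eqb_neq in Ek. rewrite Ek. auto.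
Qed.

Definition lift_in_range (t : nat) : Prop := forall k, (k < n)%nat -> m0 <= lift t k <= M0.

Lemma sample_good t k : lift_in_range t -> In k (nbrs n E (t mod n)) -> Eb (t mod n) k = false ->
  sample t k = lift t k - lift t (t mod n).
Proof.
  intros HR Hin Hb. apply in_nbrs in Hin as [Hk HE]. set (j := (t mod n)%nat) in *.
  assert (Hj : (j < n)%nat) by (apply Nat.mod_upper_bound; lia).
  unfold sample, LogC. fold j. rewrite (Hgood j k HE Hb).
  replace (Cmult (Cmult (Cmult (zstar j) (Cconj (zstar k))) (traj t k)) (Cconj (traj t j)))
    with (Cmult (Cmult (Cconj (zstar k)) (traj t k)) (Cconj (Cmult (Cconj (zstar j)) (traj t j))))
    by (rewrite Cmult_conj, Cconj_conj; ring).
  rewrite !lift_spec by auto. apply arg_rotated_cis_mult_conj; auto.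
  pose proof (HR k Hk). pose proof (HR j Hj). pose proof PI_RGT_0. lra.
Qed.

Lemma bad_nbrs_count j : length (filter (Eb j) (nbrs n E j)) = length (nbrs n Eb j).
Proof.
  unfold nbrs. induction (vertices n) as [|a l IH]; simpl; auto.
  destruct (Eb j a) eqn:Hb.
  - rewrite (HEb_sub j a Hb). simpl. rewrite Hb. simpl. congruence.
  - destruct (E j a); simpl; [rewrite Hb|]; auto.
Qed.

Lemma bad_quarter j : (j < n)%nat -> (0 < length (nbrs n E j))%nat ->
  (4 * length (nbrs n Eb j) < length (nbrs n E j))%nat.
Proof.
  intros Hj Hd. apply lt_0_INR in Hd. apply INR_lt. rewrite mult_INR. simpl (INR 4).
  assert (Hratio : INR (length (nbrs n Eb j)) / INR (length (nbrs n E j)) <= alpha0 n E Eb).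
  { apply fold_Rmax_ge, in_map_iff. exists j. split; auto. apply in_vertices; auto. }
  apply Rmult_le_compat_r with (r := INR (length (nbrs n E j))) in Hratio; [|lra].
  unfold Rdiv in Hratio. rewrite Rmult_assoc, Rinv_l in Hratio by lra. nra.
Qed.

Lemma length_samples t : length (samples t) = length (nbrs n E (t mod n)).
Proof. apply length_map. Qed.

Lemma samples_count_bad t (Q : R -> bool) : lift_in_range t ->
  (forall k, In k (nbrs n E (t mod n)) -> Eb (t mod n) k = false ->
     Q (lift t k - lift t (t mod n)) = false) ->
  (length (filter Q (samples t)) <= length (nbrs n Eb (t mod n)))%nat.
Proof.
  intros HR HQ. unfold samples. rewrite filter_length_map, <- bad_nbrs_count.
  apply filter_length_mono. intros k Hk HQk. destruct (Eb (t mod n) k) eqn:Hb; auto.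
  rewrite sample_good, HQ in HQk by auto. discriminate.
Qed.

Lemma samples_count_good t (P : nat -> bool) (Q : R -> bool) : lift_in_range t ->
  (forall k, In k (nbrs n E (t mod n)) -> Eb (t mod n) k = false -> P k = true ->
     Q (lift t k - lift t (t mod n)) = true) ->
  (length (filter P (nbrs n E (t mod n)))
     <= length (filter Q (samples t)) + length (nbrs n Eb (t mod n)))%nat.
Proof.
  intros HR HPQ. unfold samples. rewrite filter_length_map, <- bad_nbrs_count.
  apply filter_length_le_except. intros k Hk Hb HP. rewrite sample_good by auto. auto.
Qed.

Lemma ave_trim25_nil : ave (trim25 []) = 0.
Proof. unfold ave. simpl. unfold Rdiv. apply Rmult_0_l. Qed.

Lemma lift_update_le t M L :
  lift_in_range t -> (forall k, (k < n)%nat -> lift t k <= M) -> L <= M ->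
  (length (nbrs n E (t mod n))
     <= 2 * length (filter (fun k => Rleb (lift t k) L) (nbrs n E (t mod n))))%nat ->
  lift (S t) (t mod n)
    <= (1 - eta) * lift t (t mod n) + eta * (M - (M - L) / INR (length (nbrs n E (t mod n)))).
Proof.
  intros HR HM HL Hmaj. rewrite lift_updated.
  assert (Hjn : (t mod n < n)%nat) by (apply Nat.mod_upper_bound; lia).
  assert (Hj := HM _ Hjn).
  pose proof (length_samples t) as Hlen.
  destruct (length (nbrs n E (t mod n))) as [|d] eqn:Hd.
  - apply length_zero_iff_nil in Hlen. rewrite Hlen, ave_trim25_nil.
    simpl INR. unfold Rdiv. rewrite Rinv_0. nra.
  - assert (Hbad := bad_quarter _ Hjn ltac:(lia)). rewrite Hd in Hbad.
    assert (Habove := samples_count_bad t (fun x => negb (Rleb x (M - lift t (t mod n)))) HR).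
    assert (Hbelow := samples_count_good t (fun k => Rleb (lift t k) L)
                        (fun x => Rleb x (L - lift t (t mod n))) HR).
    assert (Have := ave_trim25_le (samples t) (M - lift t (t mod n)) (L - lift t (t mod n))).
    rewrite Hlen in Have.
    replace (M - lift t (t mod n) - (L - lift t (t mod n))) with (M - L) in Have by ring.
    enough (ave (trim25 (samples t)) <= M - lift t (t mod n) - (M - L) / INR (S d)) by nra.
    apply Have; [| unfold count_le | lra].
    + enough (length (filter (fun x => negb (Rleb x (M - lift t (t mod n)))) (samples t))
              <= length (nbrs n Eb (t mod n)))%nat by lia.
      apply Habove. intros k Hk _. apply in_nbrs in Hk as [Hk _].
      apply Bool.negb_false_iff, Rleb_true. pose proof (HM k Hk). lra.
    + enough (length (filter (fun k => Rleb (lift t k) L) (nbrs n E (t mod n)))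
              <= length (filter (fun x => Rleb x (L - lift t (t mod n))) (samples t))
                 + length (nbrs n Eb (t mod n)))%nat by lia.
      apply Hbelow. intros k _ _ Hk. apply Rleb_true in Hk. apply Rleb_true. lra.
Qed.

Lemma lift_update_ge t m U :
  lift_in_range t -> (forall k, (k < n)%nat -> m <= lift t k) -> m <= U ->
  (length (nbrs n E (t mod n))
     <= 2 * length (filter (fun k => Rleb U (lift t k)) (nbrs n E (t mod n))))%nat ->
  (1 - eta) * lift t (t mod n) + eta * (m + (U - m) / INR (length (nbrs n E (t mod n))))
    <= lift (S t) (t mod n).
Proof.
  intros HR Hm HU Hmaj. rewrite lift_updated.
  assert (Hjn : (t mod n < n)%nat) by (apply Nat.mod_upper_bound; lia).
  assert (Hj := Hm _ Hjn).
  pose proof (length_samples t) as Hlen.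
  destruct (length (nbrs n E (t mod n))) as [|d] eqn:Hd.
  - apply length_zero_iff_nil in Hlen. rewrite Hlen, ave_trim25_nil.
    simpl INR. unfold Rdiv. rewrite Rinv_0. nra.
  - assert (Hbad := bad_quarter _ Hjn ltac:(lia)). rewrite Hd in Hbad.
    assert (Hbelow := samples_count_bad t (fun x => negb (Rleb (m - lift t (t mod n)) x)) HR).
    assert (Habove := samples_count_good t (fun k => Rleb U (lift t k))
                        (fun x => Rleb (U - lift t (t mod n)) x) HR).
    assert (Have := ave_trim25_ge (samples t) (m - lift t (t mod n)) (U - lift t (t mod n))).
    rewrite Hlen in Have.
    replace (U - lift t (t mod n) - (m - lift t (t mod n))) with (U - m) in Have by ring.
    enough (m - lift t (t mod n) + (U - m) / INR (S d) <= ave (trim25 (samples t))) by nra.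
    apply Have; [| | lra].
    + enough (length (filter (fun x => negb (Rleb (m - lift t (t mod n)) x)) (samples t))
              <= length (nbrs n Eb (t mod n)))%nat by lia.
      apply Hbelow. intros k Hk _. apply in_nbrs in Hk as [Hk _].
      apply Bool.negb_false_iff, Rleb_true. pose proof (Hm k Hk). lra.
    + enough (length (filter (fun k => Rleb U (lift t k)) (nbrs n E (t mod n)))
              <= length (filter (fun x => Rleb (U - lift t (t mod n)) x) (samples t))
                 + length (nbrs n Eb (t mod n)))%nat by lia.
      apply Habove. intros k _ _ Hk. apply Rleb_true in Hk. apply Rleb_true. lra.
Qed.

Lemma lift_in_range_step t : lift_in_range t -> lift_in_range (S t).
Proof.
  intros HR k Hk. destruct (Nat.eq_dec k (t mod n)) as [->|Hkj]; [|rewrite lift_frozen; auto].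
  assert (Hall : forall P : nat -> bool, (forall i, (i < n)%nat -> P i = true) ->
            length (filter P (nbrs n E (t mod n))) = length (nbrs n E (t mod n))).
  { intros P HP. apply filter_length_all. intros i Hi. apply HP, (in_nbrs n E (t mod n)), Hi. }
  pose proof (HR _ Hk). split.
  - assert (Hlo := lift_update_ge t m0 m0 HR (fun i Hi => proj1 (HR i Hi)) (Rle_refl _)).
    rewrite Hall in Hlo by (intros i Hi; apply Rleb_true, HR, Hi).
    specialize (Hlo (Nat.le_add_r _ _)).
    replace (m0 + (m0 - m0) / INR (length (nbrs n E (t mod n)))) with m0 in Hlo
      by (unfold Rdiv; ring).
    nra.
  - assert (Hup := lift_update_le t M0 M0 HR (fun i Hi => proj2 (HR i Hi)) (Rle_refl _)).
    rewrite Hall in Hup by (intros i Hi; apply Rleb_true, HR, Hi).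
    specialize (Hup (Nat.le_add_r _ _)).
    replace (M0 - (M0 - M0) / INR (length (nbrs n E (t mod n)))) with M0 in Hup
      by (unfold Rdiv; ring).
    nra.
Qed.

Hypothesis lift0_in_range : lift_in_range 0.

Lemma lift_in_range_all t : lift_in_range t.
Proof. induction t; auto using lift_in_range_step. Qed.

Lemma lift_pull_le : damped_majority_le n E eta lift.
Proof. intros t M L. apply lift_update_le, lift_in_range_all. Qed.

Lemma lift_pull_ge : damped_majority_le n E eta (fun t k => - lift t k).
Proof.
  intros t M L HM HL Hmaj.
  assert (H := lift_update_ge t (- M) (- L) (lift_in_range_all t)).
  replace (- L - - M) with (M - L) in H by ring.
  enough ((1 - eta) * lift t (t mod n) + eta * (- M + (M - L) / INR (length (nbrs n E (t mod n))))
            <= lift (S t) (t mod n)) by lra.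
  apply H; [intros k Hk; pose proof (HM k Hk); lra | lra |].
  eapply Nat.le_trans; [apply Hmaj|]. apply Nat.mul_le_mono_l, filter_length_mono.
  intros k _ Hk. apply Rleb_true in Hk. apply Rleb_true. lra.
Qed.

Lemma dangle_lift t j k : (j < n)%nat -> (k < n)%nat ->
  dangle (Cmult (Cconj (zstar j)) (traj t j)) (Cmult (Cconj (zstar k)) (traj t k))
  = Rabs (lift t j - lift t k).
Proof.
  intros Hj Hk. pose proof (lift_in_range_all t j Hj). pose proof (lift_in_range_all t k Hk).
  unfold dangle. rewrite !lift_spec by auto. rewrite arg_rotated_cis_mult_conj; auto.
  pose proof PI_RGT_0. lra.
Qed.

Lemma delta_le_spread t m M : m <= M -> (forall k, (k < n)%nat -> m <= lift t k <= M) ->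
  delta n E zstar (traj t) <= M - m.
Proof.
  intros Hm HR. unfold delta. apply fold_Rmax_le; [lra|].
  intros x Hx. apply in_flat_map in Hx as [j [Hj Hx]]. apply in_map_iff in Hx as [k [<- Hk]].
  apply in_vertices in Hj. apply in_nbrs in Hk as [Hk _].
  rewrite dangle_lift by auto. pose proof (HR j Hj). pose proof (HR k Hk).
  apply Rabs_le. lra.
Qed.

Hypothesis Hcut : expanding_cuts n E.

Lemma delta_block_decay t :
  delta n E zstar (traj t) <= (1 - sweep_rate n eta ^ n / 2) ^ (t / (n * n)) * (M0 - m0).
Proof.
  assert (Hm : m0 <= M0) by (pose proof (lift0_in_range 0%nat Hn); lra).
  destruct (range_contraction n E eta lift Hn Heta lift_frozen lift_pull_le lift_pull_ge Hcut
              t m0 M0 Hm lift0_in_range) as [m [M [Hs HR]]].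
  eapply Rle_trans; [|apply Hs]. apply delta_le_spread; auto.
  pose proof (HR 0%nat Hn). lra.
Qed.
End Lift.

Lemma exists_bounds_in_open (f : nat -> R) B n : 0 < B ->
  (forall k, (k < n)%nat -> - B < f k < B) ->
  exists m M, - B < m /\ M < B /\ forall k, (k < n)%nat -> m <= f k <= M.
Proof.
  intros HB. induction n as [|n IH]; intros H.
  - exists 0, 0. split; [lra|split; [lra|]]. intros; lia.
  - destruct IH as [m [M [H1 [H2 H3]]]]; [intros; apply H; lia|].
    pose proof (H n ltac:(lia)).
    exists (Rmin m (f n)), (Rmax M (f n)). split; [apply Rmin_glb_lt; lra|].
    split; [apply Rmax_lub_lt; lra|].
    intros k Hk. destruct (Nat.eq_dec k n) as [->|Hkn].
    + split; [apply Rmin_r| apply Rmax_r].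
    + pose proof (H3 k ltac:(lia)). split.
      * eapply Rle_trans; [apply Rmin_l|lra].
      * eapply Rle_trans; [|apply Rmax_l]. lra.
Qed.

Lemma lift0_bounds n E zstar zobs z0 c eta :
  (forall j, (j < n)%nat -> Cmod (zstar j) = 1) -> (forall j, (j < n)%nat -> Cmod (z0 j) = 1) ->
  Cmod c = 1 ->
  (forall j, (j < n)%nat -> dangle c (Cmult (Cconj (zstar j)) (z0 j)) < PI / 2) ->
  exists m0 M0, - PI / 2 < m0 /\ M0 < PI / 2 /\
    lift_in_range n E zstar zobs z0 c eta m0 M0 0.
Proof.
  intros Hzstar Hz0 Hc Hi.
  destruct (exists_bounds_in_open (lift n E zstar zobs z0 c eta 0%nat) (PI / 2) n)
    as [m0 [M0 [Hm0 [HM0 H0]]]].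
  - pose proof PI_RGT_0; lra.
  - intros k Hk. simpl lift.
    enough (- PI / 2 < arg (Cmult (Cmult (Cconj (zstar k)) (z0 k)) (Cconj c)) < PI / 2) by lra.
    apply arg_of_dangle_lt; auto.
    rewrite Cmod_mult, Cmod_conj, Hzstar, Hz0 by auto. ring.
  - exists m0, M0. split; [lra|]. split; auto.
Qed.

Theorem theorem3
  (n : nat) (E Eb : nat -> nat -> bool)
  (* simple undirected graph on [n] = {0,..,n-1} *)
  (HE_range : forall j k, E j k = true -> (j < n)%nat /\ (k < n)%nat)
  (HE_sym : forall j k, E j k = E k j)
  (HE_irrefl : forall j, E j j = false)
  (* E = E_g ∪ E_b, with E_b ⊆ E the bad edges (E_g = E \ E_b) *)
  (HEb_sub : forall j k, Eb j k = true -> E j k = true)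
  (HEb_sym : forall j k, Eb j k = Eb k j)
  (zstar : nat -> C) (Hzstar : forall j, (j < n)%nat -> Cmod (zstar j) = 1)
  (zobs : nat -> nat -> C)
  (Hzobs_unit : forall j k, E j k = true -> Cmod (zobs j k) = 1)
  (Hzobs_conj : forall j k, E j k = true -> zobs k j = Cconj (zobs j k))
  (Hgood : forall j k, E j k = true -> Eb j k = false ->
             zobs j k = Cmult (zstar j) (Cconj (zstar k)))
  (Halpha : alpha0 n E Eb < 1/4)
  (z0 : nat -> C) (Hz0 : forall j, (j < n)%nat -> Cmod (z0 j) = 1)
  (Hinit : exists c : C, Cmod c = 1 /\
             forall j, (j < n)%nat -> dangle c (Cmult (Cconj (zstar j)) (z0 j)) < PI / 2)
  (Hcut : forall J : nat -> bool,
      (exists j, (j < n)%nat /\ J j = true) ->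
      (2 * length (filter J (vertices n)) <= n)%nat ->
      exists j, (j < n)%nat /\ J j = true /\
        (length (filter (fun k => J k) (nbrs n E j))
         < length (filter (fun k => negb (J k)) (nbrs n E j)))%nat)
  (eta : R) (Heta : 0 < eta < 1) :
  is_lim_seq (fun t => delta n E zstar (sync_traj n E zobs eta z0 t)) 0
  /\
  ((forall j k, (j < n)%nat -> (k < n)%nat -> (E j k = true <-> j <> k)) ->
   exists (K rho : R), 0 <= K /\ 0 <= rho < 1 /\
     forall t, delta n E zstar (sync_traj n E zobs eta z0 t) <= K * rho ^ t).
Proof.
  destruct (Nat.eq_dec n 0) as [->|Hn0].
  { split; [apply is_lim_seq_const|]. intros _. exists 0, 0. split; [lra|split; [lra|]].
    intros t. rewrite Rmult_0_l. apply Req_le. reflexivity. }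
  assert (Hn : (0 < n)%nat) by lia.
  destruct Hinit as [c [Hc Hi]].
  destruct (lift0_bounds n E zstar zobs z0 c eta Hzstar Hz0 Hc Hi)
    as [m0 [M0 [Hm0 [HM0 H0]]]].
  assert (Hm : 0 <= M0 - m0) by (pose proof (H0 0%nat Hn); lra).
  pose proof (contraction_factor_bounds n eta Hn Heta) as Hg.
  destruct (geometric_of_block_decay _ (sweep_rate n eta ^ n / 2) (n * n) (M0 - m0)
              ltac:(lra) ltac:(nia) Hm
              (delta_block_decay n E Eb zstar zobs z0 c eta m0 M0 Hn HEb_sub Hzstar Hgood
                 Halpha Hz0 Hc Heta Hm0 HM0 H0 Hcut))
    as [K [rho [HK [Hrho Hgeo]]]].
  split.
  - apply (is_lim_seq_0_of_geometric _ K rho Hrho). intros t. split; auto.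
    apply fold_Rmax_nonneg.
  - intros _. exists K, rho. auto.
Qed.
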